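(* Let $(R,\mathfrak m)$ be a noetherian local ring, $\nu$ a valuation centered on $R$, $\nu=\nu_1\circ\nu_2$ a decomposition, and $\mathfrak p=\mathfrak C_{\nu_1}(R)$ (so $\nu_2$ is centered on $R/\mathfrak p$). For each local blowing up $R/\mathfrak p\to\overline R^{(1)}$ with respect to $\nu_2$, there exists a local blowing up $R\to R^{(1)}$ with respect to $\nu$ such that $R^{(1)}/\mathfrak p^{(1)}\simeq\overline R^{(1)}$ and $R_{\mathfrak p}\simeq R^{(1)}_{\mathfrak p^{(1)}}$, where $\mathfrak p^{(1)}=\mathfrak C_{\nu_1}(R^{(1)})$.
   Context: All rings are commutative noetherian with $1$. A valuation on a ring $R$ is a map $\nu:R\to\Gamma\cup\{\infty\}$ ($\Gamma$ an ordered abelian group) with $\nu(ab)=\nu(a)+\nu(b)$, $\nu(a+b)\ge\min\{\nu(a),\nu(b)\}$, $\nu(1)=0$, $\nu(0)=\infty$, whose support $\mathrm{supp}(\nu)=\{a:\nu(a)=\infty\}$ is a minimal prime ideal; it extends to localizations at multiplicative sets disjoint from the support via $\nu(a/s)=\nu(a)-\nu(s)$ and restricts to subrings, implicitly. $\nu$ has a center on $R$ if $\nu\ge0$ on $R$; its center is $\mathfrak C_\nu(R)=\{a:\nu(a)>0\}$. $\nu$ is centered on a local ring $(R,\mathfrak m)$ if $\nu\ge0$ on $R$ and $\nu>0$ on $\mathfrak m$. $\nu R$ denotes the subgroup of $\Gamma$ generated by the finite values of $\nu$. Local blowing up: for $b\in R\setminus\mathrm{supp}(\nu)$ let $J(b)=\bigcup_{i\ge1}\mathrm{ann}_R(b^i)$,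 so $R/J(b)\subseteq R_b$. Given $a_1,\ldots,a_r\in R$ with $\nu(a_i)\ge\nu(b)$, let $R'=(R/J(b))[a_1/b,\ldots,a_r/b]\subseteq R_b$ and $R^{(1)}=R'_{\mathfrak C_\nu(R')}$; the canonical map $R\to R^{(1)}$ is the local blowing up of $R$ with respect to $\nu$ along $(b,a_1,\ldots,a_r)$. Decomposition: let $\Delta$ be a convex subgroup of $\nu R$. Define $\nu_1(a)=\nu(a)+\Delta\in\nu R/\Delta$ (and $\infty$ if $\nu(a)=\infty$); $\nu_1$ is a valuation with a center on $R$, and $\mathfrak p=\mathfrak C_{\nu_1}(R)=\{a:\nu(a)>\delta\ \forall\delta\in\Delta\}$. Define $\nu_2$ on $R/\mathfrak p$ by $\nu_2(a+\mathfrak p)=\nu(a)$ for $a\notin\mathfrak p$, $\infty$ for $a\in\mathfrak p$. We write $\nu=\nu_1\circ\nu_2$. On a local blowing up $R^{(1)}$ of $R$ with respect to $\nu$, $\nu_1$ is defined by the same formula from the extension of $\nu$. *)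

From HB Require Import structures.
From mathcomp Require Import all_boot all_order all_algebra.
Set Implicit Arguments. Unset Strict Implicit. Unset Printing Implicit Defensive.
Import Order.TTheory GRing.Theory.
Local Open Scope ring_scope.

Section Rings.
Variable R : comNzRingType.

Definition is_unit (x : R) : Prop := exists y, x * y = 1.

Definition is_ideal (I : R -> Prop) : Prop :=
  I 0 /\ (forall x y, I x -> I y -> I (x + y)) /\ (forall r x, I x -> I (r * x)).

Definition is_prime_ideal (P : R -> Prop) : Prop :=
  is_ideal P /\ ~ P 1 /\ (forall x y, P (x * y) -> P x \/ P y).

Definition is_minimal_prime (P : R -> Prop) : Prop :=
  is_prime_ideal P /\
  forall Q : R -> Prop, is_prime_ideal Q -> (forall x, Q x -> P x) -> forall x, P x -> Q x.

Definition noetherian : Prop :=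
  forall I : nat -> R -> Prop, (forall n, is_ideal (I n)) ->
    (forall n x, I n x -> I n.+1 x) ->
    exists n, forall m, (n <= m)%N -> forall x, I m x <-> I n x.

Definition is_local (m : R -> Prop) : Prop :=
  is_ideal m /\ ~ m 1 /\ forall x, ~ m x -> is_unit x.

Definition subring_closedP (A : R -> Prop) : Prop :=
  A 1 /\ (forall x y, A x -> A y -> A (x - y)) /\ (forall x y, A x -> A y -> A (x * y)).

Definition gen_subring (G : R -> Prop) (t : R) : Prop :=
  forall A : R -> Prop, subring_closedP A -> (forall x, G x -> A x) -> A t.
End Rings.

(* f : T -> S restricted to the subring A of T is a localization of A at the
   multiplicative subset M of A (Mathlib-style "IsLocalization") *)
Definition is_localization_on (T S : comNzRingType) (A M : T -> Prop) (f : T -> S) : Prop :=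
  [/\ (forall x y, A x -> A y -> f (x + y) = f x + f y),
      (forall x y, A x -> A y -> f (x * y) = f x * f y) /\ f 1 = 1,
      (forall u, M u -> is_unit (f u)),
      (forall s, exists a u, A a /\ M u /\ s * f u = f a)
    & (forall a, A a -> (f a = 0 <-> exists u, M u /\ u * a = 0))].

Definition is_localization (T S : comNzRingType) (M : T -> Prop) (f : T -> S) : Prop :=
  is_localization_on (fun _ => True) M f.

Section Val.
Variables (G : zmodType) (le : rel G).

Definition ordered_group : Prop :=
  [/\ reflexive le, antisymmetric le, transitive le, total le
    & forall x y z, le x y -> le (x + z) (y + z)].

(* G u {oo} is encoded as option G, None = oo *)
Definition vle (x y : option G) : Prop :=
  match x, y with
  | _, None => True
  | None, Some _ => False
  | Some a, Some b => le a b
  end.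
Definition vlt (x y : option G) : Prop := vle x y /\ x <> y.

Definition vadd (x y : option G) : option G :=
  match x, y with
  | Some a, Some b => Some (a + b)
  | _, _ => None
  end.

Section OnRing.
Variable R : comNzRingType.

Definition vsupp (nu : R -> option G) (x : R) : Prop := nu x = None.

Definition vmult (nu : R -> option G) : Prop :=
  forall x y, nu (x * y) = vadd (nu x) (nu y).

Definition is_valuation (nu : R -> option G) : Prop :=
  [/\ vmult nu,
      (forall x y, vle (nu x) (nu (x + y)) \/ vle (nu y) (nu (x + y))),
      nu 1 = Some 0, nu 0 = None
    & is_minimal_prime (vsupp nu)].

Definition centered_on (nu : R -> option G) (m : R -> Prop) : Prop :=
  (forall x, vle (Some 0) (nu x)) /\ (forall x, m x -> vlt (Some 0) (nu x)).

Definition is_subgroup (H : G -> Prop) : Prop :=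
  H 0 /\ forall x y, H x -> H y -> H (x - y).

Definition value_group (nu : R -> option G) (g : G) : Prop :=
  forall H : G -> Prop, is_subgroup H -> (forall x a, nu x = Some a -> H a) -> H g.

Definition convex_subgroup (nu : R -> option G) (D : G -> Prop) : Prop :=
  [/\ is_subgroup D, (forall g, D g -> value_group nu g)
    & forall x y z, D x -> D z -> value_group nu y -> le x y -> le y z -> D y].

(* center of nu_1 = nu mod Delta :  { a | nu a > delta for all delta in Delta } *)
Definition center1 (nu : R -> option G) (D : G -> Prop) (a : R) : Prop :=
  forall d, D d -> vlt (Some d) (nu a).
End OnRing.

(* Local blowing up phi : R -> S of R w.r.t. nu along (b, a_1, ..., a_r):
   T = R_b (via psi), nuT the extension of nu to R_b,
   R' = (R/J(b))[a_1/b, ..., a_r/b] = subring of T generated by psi(R) and the a_i/b,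
   S = R'_{C_nu(R')} (via f), and phi = f o psi. *)
Definition local_blowup (R S : comNzRingType) (phi : R -> S) (nu : R -> option G)
    (b : R) (as_ : seq R) : Prop :=
  nu b <> None /\ (forall a, a \in as_ -> vle (nu b) (nu a)) /\
  exists (T : comNzRingType) (psi : {rmorphism R -> T}) (nuT : T -> option G),
    [/\ is_localization (fun x => exists n, x = b ^+ n) psi,
        vmult nuT, (forall x, nuT (psi x) = nu x)
      & exists f : T -> S,
          let R' := gen_subring (fun t => (exists x, t = psi x) \/
                                          (exists a, a \in as_ /\ t * psi b = psi a)) in
          is_localization_on R' (fun t => R' t /\ ~ vlt (Some 0) (nuT t)) f /\
          forall x, phi x = f (psi x)].
End Val.

From HB Require Import structures.
From mathcomp Require Import all_boot all_order all_algebra.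
From mathcomp Require Import generic_quotient boolp ring.
Set Implicit Arguments. Unset Strict Implicit. Unset Printing Implicit Defensive.
Import GRing.Theory.
Local Open Scope ring_scope.

(* Lift bbar and the abar_i to b and a_i in R. As nu_2(bbar) is finite, nu(b) lies in
   Delta, so b is outside p and nu_2(abar_i) >= nu_2(bbar) gives nu(a_i) >= nu(b); let
   R -> R^(1) be the blowing up along (b, a_1, ..., a_r). Because nu(b^n) lies in
   Delta, a fraction a/b^n of R_b is in the centre of nu_1 exactly when a is in p.
   Hence reduction modulo p, which maps R_b to (R/p)_bbar, sends R' = R[a_i/b] onto
   Rbar' = (R/p)[abar_i/bbar], matches the elements of R' of value 0 with those of
   Rbar' of value 0, and kills exactly the centre of nu_1; this gives R^(1)/p^(1) =
   Rbar^(1). On the other hand b and all these denominators lie outside p, so R^(1)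
   maps to R_p, and that map is the localization of R^(1) at the complement of p^(1). *)

Lemma map_surj (T U : Type) (f : T -> U) : (forall y, exists x, f x = y) ->
  forall s : seq U, exists s', map f s' = s.
Proof.
move=> f_surj; elim=> [|y s [s' <-]]; first by exists [::].
by have [x <-] := f_surj y; exists (x :: s').
Qed.

(** * Ordered groups *)

Section OrderedGroup.
Variables (G : zmodType) (le : rel G).
Hypothesis Hord : ordered_group le.

Lemma le_refl x : le x x. Proof. by case: Hord. Qed.
Lemma le_trans y x z : le x y -> le y z -> le x z.
Proof. by case: Hord => _ _ t _ _; apply: t. Qed.
Lemma le_anti x y : le x y -> le y x -> x = y.
Proof. by case: Hord => _ a _ _ _ h1 h2; apply: a; rewrite h1 h2. Qed.
Lemma le_total x y : le x y \/ le y x.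
Proof. by case: Hord => _ _ _ t _; case/orP: (t x y); [left | right]. Qed.
Lemma le_add2r z x y : le (x + z) (y + z) <-> le x y.
Proof.
case: Hord => _ _ _ _ mono; split; last exact: mono.
by move/(mono _ _ (- z)); rewrite !addrK.
Qed.
Lemma le_add x y x' y' : le x y -> le x' y' -> le (x + x') (y + y').
Proof.
move=> h h'; apply: (@le_trans (y + x')); first by apply/le_add2r.
by rewrite ![y + _]addrC; apply/le_add2r.
Qed.

Lemma double_eq0 (c : G) : c + c = 0 -> c = 0.
Proof.
move=> e; have [h|h] := @le_total 0 c; apply: le_anti => //;
  by have /(le_add2r c) := h; rewrite add0r e.
Qed.

Local Notation vle := (vle le).
Local Notation vlt := (vlt le).
Implicit Types x y : option G.

Definition vsub x y : option G :=
  match x, y with Some a, Some b => Some (a - b) | _, _ => None end.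

Lemma vle_trans y x z : vle x y -> vle y z -> vle x z.
Proof. by case: x => [a|]; case: y => [b|]; case: z => [c|] //=; apply: le_trans. Qed.
Lemma vle_add x y x' y' : vle x y -> vle x' y' -> vle (vadd x x') (vadd y y').
Proof.
by case: x => [a|]; case: y => [b|]; case: x' => [a'|]; case: y' => [b'|] //=; apply: le_add.
Qed.
Lemma vle_sub2r (c : G) x y : vle x y -> vle (vsub x (Some c)) (vsub y (Some c)).
Proof. by case: x => [a|]; case: y => [b|] //= /(le_add2r (- c)). Qed.

Lemma vsub_addK x (c : G) : vsub (vadd x (Some c)) (Some c) = x.
Proof. by case: x => //= a; rewrite addrK. Qed.
Lemma vsub_add x x' (c c' : G) :
  vsub (vadd x x') (Some (c + c')) = vadd (vsub x (Some c)) (vsub x' (Some c')).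
Proof. by case: x => [a|]; case: x' => [a'|] //=; rewrite opprD addrACA. Qed.

Lemma vsub_addr x (c c' : G) : vsub (vadd x (Some c')) (Some (c + c')) = vsub x (Some c).
Proof. by case: x => //= a; rewrite opprD addrACA subrr addr0. Qed.

Lemma vsub_ge0 x (c : G) : vle (Some 0) (vsub x (Some c)) <-> vle (Some c) x.
Proof. by case: x => //= a; rewrite -(le_add2r c) add0r subrK. Qed.

Lemma vlt_subr (d : G) x (c : G) : vlt (Some d) (vsub x (Some c)) <-> vlt (Some (d + c)) x.
Proof.
case: x => [a|]; rewrite /vlt //=; rewrite -(le_add2r c) subrK.
by split=> -[h ne]; split=> // -[e]; apply: ne; rewrite ?e ?subrK // -e addrK.
Qed.
End OrderedGroup.

(** * Subrings, units and valuations *)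

Definition ultrametric (G : zmodType) (le : rel G) (Y : comNzRingType) (v : Y -> option G) :=
  forall x y, vle le (v x) (v (x + y)) \/ vle le (v y) (v (x + y)).

Section Subrings.
Variable Y : comNzRingType.

Section Closed.
Variable A : Y -> Prop.
Hypothesis HA : subring_closedP A.

Lemma subring1 : A 1. Proof. by case: HA. Qed.
Lemma subringB x y : A x -> A y -> A (x - y). Proof. by case: HA => _ [hB _]; apply: hB. Qed.
Lemma subringM x y : A x -> A y -> A (x * y). Proof. by case: HA => _ [_ hM]; apply: hM. Qed.
Lemma subring0 : A 0. Proof. by rewrite -(subrr 1); apply: subringB; apply: subring1. Qed.
Lemma subringN x : A x -> A (- x).
Proof. by rewrite -sub0r; apply: subringB; apply: subring0. Qed.
Lemma subringD x y : A x -> A y -> A (x + y).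
Proof. by move=> Ax Ay; rewrite -[y]opprK; apply: subringB => //; apply: subringN. Qed.
End Closed.

Lemma subringT : subring_closedP (fun _ : Y => True). Proof. by []. Qed.

Section Generated.
Variable gens : Y -> Prop.

Lemma gen_subring_closed : subring_closedP (gen_subring gens).
Proof.
split; first by move=> A [].
split=> x y hx hy A HA gA.
  by apply: (subringB HA); [apply: hx | apply: hy].
by apply: (subringM HA); [apply: hx | apply: hy].
Qed.
Lemma gen_subring_gen x : gens x -> gen_subring gens x.
Proof. by move=> gx A _; apply. Qed.
Lemma gen_subring_ind (A : Y -> Prop) : subring_closedP A -> (forall x, gens x -> A x) ->
  forall x, gen_subring gens x -> A x.
Proof. by move=> HA gA x; apply. Qed.
End Generated.

Definition uinv (y : Y) : Y :=
  if pselect (is_unit y) is left uy then projT1 (cid uy) else 0.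

Lemma mulr_uinv (y : Y) : is_unit y -> y * uinv y = 1.
Proof. by rewrite /uinv => uy; case: pselect => // uy'; apply: projT2 (cid uy'). Qed.
Lemma uinv_unit (y : Y) : is_unit y -> is_unit (uinv y).
Proof. by move=> uy; exists y; rewrite mulrC mulr_uinv. Qed.
Lemma unitM (x y : Y) : is_unit x -> is_unit y -> is_unit (x * y).
Proof. by case=> a ha [b hb]; exists (a * b); rewrite mulrACA ha hb mulr1. Qed.
Lemma uinv_eq (y z : Y) : y * z = 1 -> uinv y = z.
Proof.
move=> yz; have uy : is_unit y by exists z.
by rewrite -[uinv y]mulr1 -yz mulrA [uinv y * y]mulrC mulr_uinv // mul1r.
Qed.
Lemma uinvM (x y : Y) : is_unit x -> is_unit y -> uinv (x * y) = uinv x * uinv y.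
Proof. by move=> ux uy; apply: uinv_eq; rewrite mulrACA !mulr_uinv // mulr1. Qed.
Lemma uinv1 : uinv 1 = 1 :> Y. Proof. by apply: uinv_eq; rewrite mulr1. Qed.
Lemma uinv_cross (x y z w : Y) : is_unit y -> is_unit w -> x * w = z * y ->
  x * uinv y = z * uinv w.
Proof.
move=> uy uw e; have -> : x * uinv y = x * w * (uinv y * uinv w).
  by rewrite -[LHS]mulr1 -(mulr_uinv uw); ring.
by rewrite e -[RHS]mulr1 -(mulr_uinv uy); ring.
Qed.
Lemma unit_mulIl (u x y : Y) : is_unit u -> x * u = y * u -> x = y.
Proof. by case=> w uw e; rewrite -[x]mulr1 -[y]mulr1 -uw !mulrA e. Qed.
Lemma unit_mul_eq0 (y z : Y) : is_unit y -> y * z = 0 -> z = 0.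
Proof. by case=> a ha e; rewrite -[z]mul1r -ha mulrAC e mul0r. Qed.
End Subrings.

Section SubringMorphism.
Variables (Y Z : comNzRingType) (f : {rmorphism Y -> Z}).

Lemma subring_preim (B : Z -> Prop) : subring_closedP B -> subring_closedP (fun y => B (f y)).
Proof.
move=> HB; split; first by rewrite rmorph1; apply: subring1.
by split=> x y; rewrite ?rmorphB ?rmorphM; [apply: subringB | apply: subringM].
Qed.

Lemma subring_image (A : Y -> Prop) :
  subring_closedP A -> subring_closedP (fun z => exists2 y, A y & f y = z).
Proof.
move=> HA; split; first by exists 1; [apply: subring1 | apply: rmorph1].
split=> _ _ [x Ax <-] [y Ay <-].
  by exists (x - y); [apply: subringB | apply: rmorphB].
by exists (x * y); [apply: subringM | apply: rmorphM].
Qed.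
End SubringMorphism.

Definition mk_rmorphism (R S : comNzRingType) (f : R -> S)
    (fD : nmod_morphism f) (fM : monoid_morphism f) : {rmorphism R -> S} :=
  HB.pack f (GRing.isNmodMorphism.Build R S f fD) (GRing.isMonoidMorphism.Build R S f fM).

Section Valuations.
Variables (G : zmodType) (le : rel G) (Y : comNzRingType) (v : Y -> option G).
Hypotheses (Hord : ordered_group le) (v_mult : vmult v) (v1 : v 1 = Some 0)
  (v_ultra : ultrametric le v).

Lemma val_opp y : v (- y) = v y.
Proof.
have vN1 : v (-1) = Some 0.
  move: (v_mult (-1) (-1)); rewrite mulrNN mulr1 v1.
  by case: (v (-1)) => //= c [/esym/(double_eq0 Hord) ->].
by rewrite -mulN1r v_mult vN1; case: (v y) => //= c; rewrite add0r.
Qed.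

Lemma val_ge0_subring : subring_closedP (fun y => vle le (Some 0) (v y)).
Proof.
split; first by rewrite v1 /= le_refl.
split=> x y hx hy; last by rewrite v_mult; have := vle_add Hord hx hy; rewrite /= addr0.
by have [h|h] := v_ultra x (- y); apply: (vle_trans Hord _ h); rewrite ?val_opp.
Qed.
End Valuations.

(** * Localization *)

Section Fractions.
Variables (X : comNzRingType) (A M : X -> Prop).

Record localizable : Prop := Localizable {
  loc_subring : subring_closedP A;
  loc_denom1 : M 1;
  loc_denomM : forall u v, M u -> M v -> M (u * v);
  loc_denom_sub : forall u, M u -> A u;
  loc_denom_neq0 : ~ M 0 }.

Hypothesis HAM : localizable.

Implicit Types x y : X * X.

Definition frac_ok x := A x.1 /\ M x.2.
Definition frac_eqv x y := exists2 w, M w & w * (x.1 * y.2 - y.1 * x.2) = 0.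

(* Pairs that are not fractions are identified with 0/1: this makes [frac_eqb]
   an equivalence on the whole of X * X. *)
Definition frac_norm x := if `[< frac_ok x >] then x else (0, 1).
Definition frac_eqb x y := `[< frac_eqv (frac_norm x) (frac_norm y) >].

Lemma frac_ok0 : frac_ok (0, 1).
Proof. by split; [apply: subring0 (loc_subring HAM) | apply: loc_denom1]. Qed.
Lemma frac_ok1 : frac_ok (1, 1).
Proof. by split; [apply: subring1 (loc_subring HAM) | apply: loc_denom1]. Qed.
Lemma frac_ok_norm x : frac_ok (frac_norm x).
Proof. by rewrite /frac_norm; case: asboolP => // _; apply: frac_ok0. Qed.
Lemma frac_normE x : frac_ok x -> frac_norm x = x.
Proof. by rewrite /frac_norm; case: asboolP. Qed.

Lemma frac_eqv_refl x : frac_eqv x x.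
Proof. by exists 1; [apply: loc_denom1 | rewrite subrr mulr0]. Qed.
Lemma frac_eqv_sym x y : frac_eqv x y -> frac_eqv y x.
Proof. by case=> w Mw e; exists w; rewrite // -opprB mulrN e oppr0. Qed.
Lemma frac_eqv_trans y x z : M y.2 -> frac_eqv x y -> frac_eqv y z -> frac_eqv x z.
Proof.
move=> My [w Mw e1] [w' Mw' e2].
exists (w * w' * y.2); first by do ?apply: loc_denomM.
have -> : w * w' * y.2 * (x.1 * z.2 - z.1 * x.2) =
  w' * z.2 * (w * (x.1 * y.2 - y.1 * x.2)) + w * x.2 * (w' * (y.1 * z.2 - z.1 * y.2)) by ring.
by rewrite e1 e2 !mulr0 addr0.
Qed.

Lemma frac_eqb_equiv : equiv_class_of frac_eqb.
Proof.
split=> [x | x y | y x z]; rewrite /frac_eqb.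
- exact/asboolP/frac_eqv_refl.
- by apply/asboolP/asboolP => /frac_eqv_sym.
- move=> /asboolP h1 /asboolP h2; apply/asboolP.
  exact: frac_eqv_trans (proj2 (frac_ok_norm y)) h1 h2.
Qed.

Canonical frac_equiv := EquivRelPack frac_eqb_equiv.
Canonical frac_encModRel := defaultEncModRel frac_eqb.

Definition loc := {eq_quot frac_eqb}%qT.
HB.instance Definition _ : EqQuotient (X * X)%type frac_eqb loc := EqQuotient.on loc.
HB.instance Definition _ := Choice.on loc.

Definition fracp x : loc := (\pi_loc x)%qT.
Definition rep (z : loc) := frac_norm (repr z).

Lemma frac_ok_rep z : frac_ok (rep z). Proof. exact: frac_ok_norm. Qed.

Lemma fracp_eq x y : frac_ok x -> frac_ok y -> fracp x = fracp y <-> frac_eqv x y.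
Proof.
move=> ox oy; rewrite /fracp; split=> [/eqP | e].
  by rewrite eqmodE /= /frac_eqb !frac_normE // => /asboolP.
by apply/eqP; rewrite eqmodE /= /frac_eqb !frac_normE //; apply/asboolP.
Qed.

Lemma fracp_rep z : fracp (rep z) = z.
Proof.
rewrite -[in RHS](reprK z) /rep /fracp; apply/eqP; rewrite eqmodE /= /frac_eqb.
by rewrite (frac_normE (frac_ok_norm _)); apply/asboolP/frac_eqv_refl.
Qed.

Lemma rep_fracp x : frac_ok x -> frac_eqv (rep (fracp x)) x.
Proof. by move=> ox; apply/fracp_eq; rewrite ?fracp_rep //; apply: frac_ok_rep. Qed.

Lemma fracp_cross x y : frac_ok x -> frac_ok y -> x.1 * y.2 = y.1 * x.2 -> fracp x = fracp y.
Proof.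
move=> ox oy e; apply/fracp_eq => //.
by exists 1; [apply: loc_denom1 | rewrite e subrr mulr0].
Qed.

Definition addp x y := (x.1 * y.2 + y.1 * x.2, x.2 * y.2).
Definition mulp x y := (x.1 * y.1, x.2 * y.2).
Definition oppp x := (- x.1, x.2).

Lemma frac_ok_add x y : frac_ok x -> frac_ok y -> frac_ok (addp x y).
Proof.
case=> Ax Mx [Ay My]; have HA := loc_subring HAM; have MA := loc_denom_sub HAM.
by split; [apply: (subringD HA); apply: (subringM HA) | apply: loc_denomM]; auto.
Qed.
Lemma frac_ok_mul x y : frac_ok x -> frac_ok y -> frac_ok (mulp x y).
Proof.
case=> Ax Mx [Ay My].
by split; [apply: (subringM (loc_subring HAM)) | apply: loc_denomM].
Qed.
Lemma frac_ok_opp x : frac_ok x -> frac_ok (oppp x).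
Proof. by case=> Ax Mx; split => //; apply: (subringN (loc_subring HAM)). Qed.
Hint Resolve frac_ok0 frac_ok1 frac_ok_rep frac_ok_add frac_ok_mul frac_ok_opp : core.

Lemma addp_eqv x x' y y' : frac_eqv x x' -> frac_eqv y y' -> frac_eqv (addp x y) (addp x' y').
Proof.
case=> w Mw e; case=> w' Mw' e'; exists (w * w'); first exact: loc_denomM.
have -> : w * w' * ((addp x y).1 * (addp x' y').2 - (addp x' y').1 * (addp x y).2) =
  w' * y.2 * y'.2 * (w * (x.1 * x'.2 - x'.1 * x.2))
  + w * x.2 * x'.2 * (w' * (y.1 * y'.2 - y'.1 * y.2)) by rewrite /=; ring.
by rewrite e e' !mulr0 addr0.
Qed.
Lemma mulp_eqv x x' y y' : frac_eqv x x' -> frac_eqv y y' -> frac_eqv (mulp x y) (mulp x' y').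
Proof.
case=> w Mw e; case=> w' Mw' e'; exists (w * w'); first exact: loc_denomM.
have -> : w * w' * ((mulp x y).1 * (mulp x' y').2 - (mulp x' y').1 * (mulp x y).2) =
  w' * y.1 * y'.2 * (w * (x.1 * x'.2 - x'.1 * x.2))
  + w * x'.1 * x.2 * (w' * (y.1 * y'.2 - y'.1 * y.2)) by rewrite /=; ring.
by rewrite e e' !mulr0 addr0.
Qed.
Lemma oppp_eqv x x' : frac_eqv x x' -> frac_eqv (oppp x) (oppp x').
Proof.
case=> w Mw e; exists w => //.
by rewrite -[RHS]oppr0 -e /=; ring.
Qed.

Definition loc_add z z' := fracp (addp (rep z) (rep z')).
Definition loc_mul z z' := fracp (mulp (rep z) (rep z')).
Definition loc_opp z := fracp (oppp (rep z)).

Lemma loc_add_fracp x y : frac_ok x -> frac_ok y -> loc_add (fracp x) (fracp y) = fracp (addp x y).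
Proof. by move=> ox oy; apply/fracp_eq; auto; apply: addp_eqv; apply: rep_fracp. Qed.
Lemma loc_mul_fracp x y : frac_ok x -> frac_ok y -> loc_mul (fracp x) (fracp y) = fracp (mulp x y).
Proof. by move=> ox oy; apply/fracp_eq; auto; apply: mulp_eqv; apply: rep_fracp. Qed.
Lemma loc_opp_fracp x : frac_ok x -> loc_opp (fracp x) = fracp (oppp x).
Proof. by move=> ox; apply/fracp_eq; auto; apply: oppp_eqv; apply: rep_fracp. Qed.

Local Ltac by_cross_mult :=
  rewrite ?(loc_add_fracp, loc_mul_fracp, loc_opp_fracp); try by auto;
  apply: fracp_cross; try by auto; rewrite /=; ring.

Lemma loc_addA : associative loc_add.
Proof. by move=> a b c; rewrite -(fracp_rep a) -(fracp_rep b) -(fracp_rep c); by_cross_mult. Qed.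
Lemma loc_addC : commutative loc_add.
Proof. by move=> a b; rewrite -(fracp_rep a) -(fracp_rep b); by_cross_mult. Qed.
Lemma loc_add0 : left_id (fracp (0, 1)) loc_add.
Proof. by move=> a; rewrite -(fracp_rep a); by_cross_mult. Qed.
Lemma loc_addN : left_inverse (fracp (0, 1)) loc_opp loc_add.
Proof. by move=> a; rewrite -(fracp_rep a); by_cross_mult. Qed.
HB.instance Definition _ := GRing.isZmodule.Build loc loc_addA loc_addC loc_add0 loc_addN.

Lemma loc_mulA : associative loc_mul.
Proof. by move=> a b c; rewrite -(fracp_rep a) -(fracp_rep b) -(fracp_rep c); by_cross_mult. Qed.
Lemma loc_mulC : commutative loc_mul.
Proof. by move=> a b; rewrite -(fracp_rep a) -(fracp_rep b); by_cross_mult. Qed.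
Lemma loc_mul1 : left_id (fracp (1, 1)) loc_mul.
Proof. by move=> a; rewrite -(fracp_rep a); by_cross_mult. Qed.
Lemma loc_mulDl : left_distributive loc_mul loc_add.
Proof. by move=> a b c; rewrite -(fracp_rep a) -(fracp_rep b) -(fracp_rep c); by_cross_mult. Qed.
Lemma loc_one_neq0 : fracp (1, 1) != 0.
Proof.
apply/eqP => /fracp_eq[] // w Mw; rewrite /= mul1r mul0r subr0 mulr1 => w0.
by apply: (loc_denom_neq0 HAM); rewrite -w0.
Qed.
HB.instance Definition _ :=
  GRing.Zmodule_isComNzRing.Build loc loc_mulA loc_mulC loc_mul1 loc_mulDl loc_one_neq0.

End Fractions.

Section LocalizationMap.
Variables (X : comNzRingType) (A M : X -> Prop) (HAM : localizable A M).
Local Notation loc := (loc HAM).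
Local Notation fracp := (fracp HAM).
Hint Resolve frac_ok0 frac_ok1 frac_ok_rep frac_ok_add frac_ok_mul frac_ok_opp : core.

Definition frac (a u : X) : loc := fracp (a, u).

Lemma fracP (z : loc) : exists a u, [/\ A a, M u & z = frac a u].
Proof.
case: (frac_ok_rep z) => Aa Mu; exists (rep z).1, (rep z).2.
by rewrite /frac -surjective_pairing fracp_rep.
Qed.

Lemma frac_eq a u a' u' : A a -> M u -> A a' -> M u' -> a * u' = a' * u -> frac a u = frac a' u'.
Proof. by move=> Aa Mu Aa' Mu' e; apply: (fracp_cross HAM); try split. Qed.

Lemma frac_eq0 a u : A a -> M u -> frac a u = 0 <-> exists2 w, M w & w * a = 0.
Proof.
move=> Aa Mu; rewrite /frac -[0]/(fracp (0, 1)) fracp_eq //=; last exact: frac_ok0.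
by split=> -[w Mw e]; exists w; move: e; rewrite // mul0r subr0 mulr1.
Qed.

Lemma fracD a u a' u' : A a -> M u -> A a' -> M u' ->
  frac a u + frac a' u' = frac (a * u' + a' * u) (u * u').
Proof. by move=> Aa Mu Aa' Mu'; apply: (loc_add_fracp HAM). Qed.
Lemma fracM a u a' u' : A a -> M u -> A a' -> M u' ->
  frac a u * frac a' u' = frac (a * a') (u * u').
Proof. by move=> Aa Mu Aa' Mu'; apply: (loc_mul_fracp HAM). Qed.

Definition to_loc (x : X) : loc := if `[< A x >] then frac x 1 else 0.

Lemma to_locE x : A x -> to_loc x = frac x 1.
Proof. by rewrite /to_loc; case: asboolP. Qed.

Let A0 := subring0 (loc_subring HAM).
Let A1 := subring1 (loc_subring HAM).
Let AB := subringB (loc_subring HAM).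
Let AD := subringD (loc_subring HAM).
Let AM := subringM (loc_subring HAM).
Let M1 := loc_denom1 HAM.
Let MM := loc_denomM HAM.
Let MA := loc_denom_sub HAM.

Lemma to_locD x y : A x -> A y -> to_loc (x + y) = to_loc x + to_loc y.
Proof.
move=> Ax Ay; rewrite !to_locE ?fracD //; auto.
by apply: frac_eq; auto; rewrite !mulr1.
Qed.
Lemma to_locM x y : A x -> A y -> to_loc (x * y) = to_loc x * to_loc y.
Proof.
move=> Ax Ay; rewrite !to_locE ?fracM //; auto.
by apply: frac_eq; auto; rewrite !mulr1.
Qed.
Lemma to_loc1 : to_loc 1 = 1.
Proof. by rewrite to_locE. Qed.

Lemma frac_to_loc a u : A a -> M u -> frac a u * to_loc u = to_loc a.
Proof.
move=> Aa Mu; rewrite !to_locE ?fracM //; auto.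
by apply: frac_eq; auto; rewrite !mulr1.
Qed.

Lemma to_loc_unit u : M u -> is_unit (to_loc u).
Proof. by move=> Mu; exists (frac 1 u); rewrite mulrC frac_to_loc ?to_loc1. Qed.

Lemma to_loc_localization : is_localization_on A M to_loc.
Proof.
split; [exact: to_locD | by split; [exact: to_locM | exact: to_loc1] | exact: to_loc_unit | |].
- by move=> z; have [a [u [Aa Mu ->]]] := fracP z; exists a, u; rewrite frac_to_loc.
- move=> a Aa; rewrite to_locE // frac_eq0 //.
  by split=> [[w] | [w []]]; exists w.
Qed.

Section ComposedMap.
Variables (Y : comNzRingType) (g : {rmorphism Y -> X}).
Hypothesis gA : forall y, A (g y).

Lemma to_loc_comp_nmod : nmod_morphism (to_loc \o g).
Proof.
split=> [|x y] /=; last by rewrite rmorphD to_locD.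
by rewrite rmorph0 to_locE //; apply: subring0 (loc_subring HAM).
Qed.
Lemma to_loc_comp_monoid : monoid_morphism (to_loc \o g).
Proof. by split=> [|x y] /=; rewrite ?rmorph1 ?to_loc1 // rmorphM to_locM. Qed.
Definition to_loc_rmorph : {rmorphism Y -> loc} :=
  mk_rmorphism to_loc_comp_nmod to_loc_comp_monoid.
Lemma to_loc_rmorphE y : to_loc_rmorph y = to_loc (g y). Proof. by []. Qed.
End ComposedMap.

Section Lift.
Variables (Y : comNzRingType) (g : X -> Y).
Hypotheses (gD : forall x y, A x -> A y -> g (x + y) = g x + g y)
  (gM : forall x y, A x -> A y -> g (x * y) = g x * g y) (g1 : g 1 = 1)
  (gU : forall u, M u -> is_unit (g u)).

Let gB x y : A x -> A y -> g (x - y) = g x - g y.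
Proof.
by move=> Ax Ay; apply/eqP; rewrite eq_sym subr_eq -gD ?subrK //; apply: AB.
Qed.
Let g0 : g 0 = 0.
Proof. by have := gB A1 A1; rewrite subrr => ->; rewrite subrr. Qed.

Lemma lift_cross x y : frac_ok A M x -> frac_ok A M y -> frac_eqv M x y ->
  g x.1 * g y.2 = g y.1 * g x.2.
Proof.
case=> Ax Mx [Ay My] [w Mw e]; apply/eqP; rewrite -subr_eq0; apply/eqP.
apply: (unit_mul_eq0 (gU Mw)).
rewrite -!gM -?gB -?gM ?e ?g0 //; auto.
Qed.

Definition loc_lift_fun (z : loc) : Y := g (rep z).1 * uinv (g (rep z).2).

Lemma lift_fun_frac a u : A a -> M u -> loc_lift_fun (frac a u) = g a * uinv (g u).
Proof.
move=> Aa Mu; have [Ap Mp] := frac_ok_rep (frac a u).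
apply: uinv_cross; [exact: gU | exact: gU |].
by apply: (lift_cross (y := (a, u))) => //; apply: rep_fracp.
Qed.

Lemma lift_fun_to_loc x : A x -> loc_lift_fun (to_loc x) = g x.
Proof. by move=> Ax; rewrite to_locE // lift_fun_frac // g1 uinv1 mulr1. Qed.

Lemma loc_lift_nmod : nmod_morphism loc_lift_fun.
Proof.
split=> [|z z']; first by rewrite -[0]/(frac 0 1) lift_fun_frac // g0 mul0r.
have [a [u [Aa Mu ->]]] := fracP z; have [a' [u' [Aa' Mu' ->]]] := fracP z'.
rewrite fracD // !lift_fun_frac ?gD ?gM ?uinvM ?gU //; auto.
transitivity (g a * uinv (g u) * (g u' * uinv (g u')) + g a' * uinv (g u') * (g u * uinv (g u)));
  first ring.
by rewrite (mulr_uinv (gU Mu)) (mulr_uinv (gU Mu')) !mulr1.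
Qed.

Lemma loc_lift_monoid : monoid_morphism loc_lift_fun.
Proof.
split=> [|z z']; first by rewrite -[1]/(frac 1 1) lift_fun_frac // g1 uinv1 mulr1.
have [a [u [Aa Mu ->]]] := fracP z; have [a' [u' [Aa' Mu' ->]]] := fracP z'.
by rewrite fracM // !lift_fun_frac ?gM ?uinvM ?gU //; auto; ring.
Qed.

Definition loc_lift : {rmorphism loc -> Y} := mk_rmorphism loc_lift_nmod loc_lift_monoid.

Lemma loc_lift_frac a u : A a -> M u -> loc_lift (frac a u) = g a * uinv (g u).
Proof. exact: lift_fun_frac. Qed.
Lemma loc_lift_to_loc x : A x -> loc_lift (to_loc x) = g x.
Proof. exact: lift_fun_to_loc. Qed.
End Lift.

Definition loc_lift_rmorph (Y : comNzRingType) (g : {rmorphism X -> Y})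
    (gU : forall u, M u -> is_unit (g u)) : {rmorphism loc -> Y} :=
  loc_lift (fun x y _ _ => rmorphD g x y) (fun x y _ _ => rmorphM g x y) (rmorph1 g) gU.

Lemma loc_lift_rmorph_frac (Y : comNzRingType) (g : {rmorphism X -> Y})
    (gU : forall u, M u -> is_unit (g u)) a u :
  A a -> M u -> loc_lift_rmorph gU (frac a u) = g a * uinv (g u).
Proof. exact: loc_lift_frac. Qed.
Lemma loc_lift_rmorph_to_loc (Y : comNzRingType) (g : {rmorphism X -> Y})
    (gU : forall u, M u -> is_unit (g u)) x :
  A x -> loc_lift_rmorph gU (to_loc x) = g x.
Proof. exact: loc_lift_to_loc. Qed.

Section Valuation.
Variables (G : zmodType) (v : X -> option G).
Hypotheses (v_mult : vmult v) (v_denom : forall u, M u -> v u <> None).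

Let v_fin u : M u -> exists c, v u = Some c.
Proof. by move/v_denom; case: (v u) => [c|] // _; exists c. Qed.

Definition loc_val (z : loc) : option G := vsub (v (rep z).1) (v (rep z).2).

Lemma loc_val_frac a u : A a -> M u -> loc_val (frac a u) = vsub (v a) (v u).
Proof.
move=> Aa Mu; rewrite /loc_val; set p := rep _.
have [_ Mp] := frac_ok_rep (frac a u).
have [w Mw] : frac_eqv M p (a, u) := rep_fracp HAM (x := (a, u)) (conj Aa Mu).
rewrite mulrBr => /eqP; rewrite subr_eq0 => /eqP /(congr1 v); rewrite !v_mult.
have [cw ->] := v_fin Mw; have [cu ->] := v_fin Mu; have [cp ->] := v_fin Mp.
case: (v p.1) => [x|]; case: (v a) => [y|] //= [] /addrI e.
by congr Some; apply/eqP; rewrite subr_eq addrAC eq_sym subr_eq -e.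
Qed.

Lemma loc_val_mult : vmult loc_val.
Proof.
move=> z z'; have [a [u [Aa Mu ->]]] := fracP z; have [a' [u' [Aa' Mu' ->]]] := fracP z'.
rewrite fracM // (loc_val_frac (AM Aa Aa') (MM Mu Mu')) !loc_val_frac // !v_mult.
by have [cu ->] := v_fin Mu; have [cu' ->] := v_fin Mu'; rewrite vsub_add.
Qed.

Lemma loc_val_to_loc x : v 1 = Some 0 -> A x -> loc_val (to_loc x) = v x.
Proof.
by move=> v1 Ax; rewrite to_locE // loc_val_frac // v1; case: (v x) => //= c; rewrite subr0.
Qed.

Lemma loc_val_ultra (le : rel G) : ordered_group le -> ultrametric le v -> ultrametric le loc_val.
Proof.
move=> Hord v_ultra z z'.
have [a [u [Aa Mu ->]]] := fracP z; have [a' [u' [Aa' Mu' ->]]] := fracP z'.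
have Au' := MA Mu'; have Au := MA Mu.
rewrite fracD // (loc_val_frac (AD (AM Aa Au') (AM Aa' Au)) (MM Mu Mu')) !loc_val_frac //.
have [cu Eu] := v_fin Mu; have [cu' Eu'] := v_fin Mu'.
rewrite v_mult Eu Eu' /=.
have [h|h] := v_ultra (a * u') (a' * u); [left | right];
  move/(vle_sub2r Hord (cu + cu')): h; rewrite !v_mult ?Eu ?Eu' ?vsub_addr //.
by rewrite [cu + cu']addrC vsub_addr.
Qed.
End Valuation.
End LocalizationMap.

(** * Centres of valuations modulo a convex subgroup *)

Section Subgroup.
Variables (G : zmodType) (D : G -> Prop).
Hypothesis HD : is_subgroup D.

Lemma subgroup0 : D 0. Proof. by case: HD. Qed.
Lemma subgroupB x y : D x -> D y -> D (x - y). Proof. by case: HD => _; apply. Qed.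
Lemma subgroupN x : D x -> D (- x).
Proof. by rewrite -sub0r; apply: subgroupB subgroup0. Qed.
Lemma subgroupD x y : D x -> D y -> D (x + y).
Proof. by move=> Dx Dy; rewrite -[y]opprK; apply: subgroupB (subgroupN Dy). Qed.
Lemma subgroupMn x n : D x -> D (x *+ n).
Proof.
move=> Dx; elim: n => [|n IH]; first by rewrite mulr0n; apply: subgroup0.
by rewrite mulrS; apply: subgroupD.
Qed.
End Subgroup.

Section Center.
Variables (G : zmodType) (le : rel G) (D : G -> Prop).
Hypothesis Hord : ordered_group le.

Lemma above_vsub (c : G) (x : option G) : is_subgroup D -> D c ->
  (forall d, D d -> vlt le (Some d) (vsub x (Some c))) <-> (forall d, D d -> vlt le (Some d) x).
Proof.
move=> HD Dc; split=> gtD d Dd.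
  by have /vlt_subr := gtD _ (subgroupB HD Dd Dc); rewrite subrK; apply.
by apply/(vlt_subr Hord d x c)/gtD/(subgroupD HD).
Qed.

Variables (T : comNzRingType) (v : T -> option G).

Lemma not_center1I x g : v x = Some g -> D g -> ~ center1 le v D x.
Proof. by move=> vx Dg /(_ g Dg); rewrite vx => -[]. Qed.

Lemma not_center1_fin x : ~ center1 le v D x -> v x <> None.
Proof. by move=> nc vx; apply: nc => d _; rewrite vx. Qed.
End Center.

Section CenterOfValuation.
Variables (G : zmodType) (le : rel G) (D : G -> Prop) (R : comNzRingType) (nu : R -> option G).
Hypothesis Hord : ordered_group le.
Hypotheses (nu_mult : vmult nu) (nu1 : nu 1 = Some 0) (nu0 : nu 0 = None)
  (nu_ge0 : forall x, vle le (Some 0) (nu x)) (HD : convex_subgroup le nu D).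
Local Notation p := (center1 le nu D).

Lemma not_center1E x : ~ p x -> exists2 g, nu x = Some g & D g.
Proof.
move=> np; have [d Dd nlt] : exists2 d, D d & ~ vlt le (Some d) (nu x).
  by apply: contrapT => nex; apply: np => d Dd; apply: contrapT => nlt; apply: nex; exists d.
case E: (nu x) nlt => [g|] nlt; last by case: nlt; split.
exists g => //; have [<- //|ndg] := pselect (d = g).
have lgd : le g d.
  by have [ldg|//] := le_total Hord d g; case: nlt; split=> // -[].
case: HD => [[D0 _] _ convex]; apply: (convex 0 g d) => //.
- by move=> H HH Hv; apply: Hv E.
- by have := nu_ge0 x; rewrite E.
Qed.

Lemma center1_0 : p 0. Proof. by move=> d _; rewrite nu0; split. Qed.
Lemma not_center1M x y : ~ p x -> ~ p y -> ~ p (x * y).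
Proof.
move=> /not_center1E[g nug Dg] /not_center1E[h nuh Dh].
apply: (not_center1I (g := g + h)); first by rewrite nu_mult nug nuh.
by case: HD => HDsub _ _; apply: subgroupD.
Qed.

Lemma not_center1_localizable : localizable (fun _ : R => True) (fun x => ~ p x).
Proof.
split; [exact: subringT | | exact: not_center1M | by [] | by apply; apply: center1_0].
by case: HD => [[D0 _] _ _]; apply: not_center1I nu1 D0.
Qed.

Variables (Q : comNzRingType) (pi : R -> Q) (nu2 : Q -> option G).
Hypothesis nu2_pi : forall x, (p x -> nu2 (pi x) = None) /\ (~ p x -> nu2 (pi x) = nu x).

Lemma residue_val_fin x : nu2 (pi x) <> None -> exists2 g, nu x = Some g & D g.
Proof. by move=> fin; apply: not_center1E => px; apply: fin; apply: (proj1 (nu2_pi x)). Qed.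

Lemma residue_val_le x a : ~ p x -> vle le (nu2 (pi x)) (nu2 (pi a)) -> vle le (nu x) (nu a).
Proof.
move=> npx; rewrite (proj2 (nu2_pi x) npx).
have [pa|npa] := pselect (p a); last by rewrite (proj2 (nu2_pi a) npa).
by move=> _; have [g -> Dg] := not_center1E npx; apply: (proj1 (pa g Dg)).
Qed.
End CenterOfValuation.

(** * Local blowing up *)

Definition blowup_ring (R T : comNzRingType) (psi : R -> T) (b : R) (as_ : seq R) : T -> Prop :=
  gen_subring (fun t => (exists x, t = psi x) \/ (exists a, a \in as_ /\ t * psi b = psi a)).

Definition off_center (G : zmodType) (le : rel G) (T : comNzRingType) (A : T -> Prop)
    (v : T -> option G) (t : T) : Prop :=
  A t /\ ~ vlt le (Some 0) (v t).

Section Blowup.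
Variables (R : comNzRingType) (G : zmodType) (le : rel G) (nu : R -> option G).
Hypotheses (Hord : ordered_group le) (nu_mult : vmult nu) (nu_ultra : ultrametric le nu)
  (nu1 : nu 1 = Some 0) (nu0 : nu 0 = None) (nu_ge0 : forall x, vle le (Some 0) (nu x)).
Variables (b : R) (gb : G) (as_ : seq R).
Hypotheses (nub : nu b = Some gb) (nu_as : forall a, a \in as_ -> vle le (nu b) (nu a)).

Lemma nu_bpow n : nu (b ^+ n) = Some (gb *+ n).
Proof.
elim: n => [|n IH]; first by rewrite expr0 mulr0n nu1.
by rewrite exprS nu_mult IH nub /= mulrS.
Qed.

Definition bpow (x : R) := exists n, x = b ^+ n.

Lemma bpow_localizable : localizable (fun _ : R => True) bpow.
Proof.
split; [exact: subringT | by exists 0%N | | by [] |].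
- by move=> _ _ [i ->] [j ->]; exists (i + j)%N; rewrite exprD.
- by case=> n /(congr1 nu); rewrite nu_bpow nu0.
Qed.

Local Notation Rb := (loc bpow_localizable).

Definition to_Rb : {rmorphism R -> Rb} :=
  to_loc_rmorph bpow_localizable (g := idfun) (fun _ => I).

Lemma nu_bpow_fin u : bpow u -> nu u <> None.
Proof. by case=> n ->; rewrite nu_bpow. Qed.

Definition nu_Rb : Rb -> option G := loc_val nu.

Lemma nu_Rb_mult : vmult nu_Rb. Proof. exact: loc_val_mult nu_mult nu_bpow_fin. Qed.
Lemma nu_Rb_ultra : ultrametric le nu_Rb.
Proof. exact: (loc_val_ultra (HAM := bpow_localizable) nu_mult nu_bpow_fin Hord nu_ultra). Qed.
Lemma nu_Rb_to_Rb x : nu_Rb (to_Rb x) = nu x.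
Proof. by rewrite /nu_Rb to_loc_rmorphE (loc_val_to_loc _ nu_mult nu_bpow_fin). Qed.
Lemma nu_Rb_frac a n : nu_Rb (frac bpow_localizable a (b ^+ n)) = vsub (nu a) (Some (gb *+ n)).
Proof.
have bn : bpow (b ^+ n) by exists n.
by rewrite /nu_Rb (loc_val_frac _ nu_mult nu_bpow_fin I bn) nu_bpow.
Qed.

Lemma Rb_fracP (t : Rb) : exists a n, t = frac bpow_localizable a (b ^+ n).
Proof. by have [a [_ [_ [n ->] ->]]] := fracP t; exists a, n. Qed.

Local Notation Rprime := (blowup_ring to_Rb b as_).

Lemma nu_Rb_ge0 t : Rprime t -> vle le (Some 0) (nu_Rb t).
Proof.
move: t; apply: gen_subring_ind.
  by apply: val_ge0_subring Hord nu_Rb_mult _ nu_Rb_ultra; rewrite -(rmorph1 to_Rb) nu_Rb_to_Rb.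
move=> t [[x ->] | [a [ain /(congr1 nu_Rb)]]]; first by rewrite nu_Rb_to_Rb.
rewrite nu_Rb_mult !nu_Rb_to_Rb nub => /(congr1 (fun y => vsub y (Some gb))).
by rewrite vsub_addK => ->; apply/(vsub_ge0 Hord); rewrite -nub; apply: nu_as.
Qed.

Lemma Rprime_closed : subring_closedP Rprime. Proof. exact: gen_subring_closed. Qed.
Lemma Rprime_to_Rb x : Rprime (to_Rb x). Proof. by apply: gen_subring_gen; left; exists x. Qed.

Lemma nu_Rb1 : nu_Rb 1 = Some 0. Proof. by rewrite -(rmorph1 to_Rb) nu_Rb_to_Rb. Qed.
Lemma nu_Rb0 : nu_Rb 0 = None. Proof. by rewrite -(rmorph0 to_Rb) nu_Rb_to_Rb. Qed.

Definition Rprime_denom := off_center le Rprime nu_Rb.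

Lemma Rprime_denom_val0 t : Rprime_denom t -> nu_Rb t = Some 0.
Proof.
case=> Rt nlt; have := nu_Rb_ge0 Rt.
case: (nu_Rb t) nlt => [c|] nlt h; last by case: nlt; split.
have [-> // | nc] := pselect (c = 0).
by case: nlt; split => // -[/esym].
Qed.

Lemma Rprime_denomI t : Rprime t -> nu_Rb t = Some 0 -> Rprime_denom t.
Proof. by move=> Rt vt; split => //; rewrite vt => -[]. Qed.

Lemma Rprime_denom_localizable : localizable Rprime Rprime_denom.
Proof.
split; [exact: Rprime_closed | | | by move=> u [] | by case=> _; rewrite nu_Rb0; case; split].
- exact: Rprime_denomI (subring1 Rprime_closed) nu_Rb1.
- move=> u v Mu Mv; apply: Rprime_denomI.
    exact: (subringM Rprime_closed (proj1 Mu) (proj1 Mv)).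
  by rewrite nu_Rb_mult !Rprime_denom_val0 //= addr0.
Qed.

Local Notation R1 := (loc Rprime_denom_localizable).

Definition blowup_map : {rmorphism R -> R1} :=
  to_loc_rmorph Rprime_denom_localizable (g := to_Rb) Rprime_to_Rb.

Lemma Rprime_denom_fin u : Rprime_denom u -> nu_Rb u <> None.
Proof. by move/Rprime_denom_val0 ->. Qed.

Definition nu_R1 : R1 -> option G := loc_val nu_Rb.

Lemma nu_R1_mult : vmult nu_R1. Proof. exact: loc_val_mult nu_Rb_mult Rprime_denom_fin. Qed.
Lemma nu_R1_blowup x : nu_R1 (blowup_map x) = nu x.
Proof.
rewrite /nu_R1 to_loc_rmorphE (loc_val_to_loc _ nu_Rb_mult Rprime_denom_fin nu_Rb1) //.
  exact: nu_Rb_to_Rb.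
exact: Rprime_to_Rb.
Qed.
Lemma nu_R1_frac t u : Rprime t -> Rprime_denom u ->
  nu_R1 (frac Rprime_denom_localizable t u) = nu_Rb t.
Proof.
move=> Rt Mu; rewrite /nu_R1 (loc_val_frac _ nu_Rb_mult Rprime_denom_fin Rt Mu).
by rewrite (Rprime_denom_val0 Mu); case: (nu_Rb t) => //= c; rewrite subr0.
Qed.

Lemma blowup_local_blowup : local_blowup le blowup_map nu b as_.
Proof.
split; first by rewrite nub.
split=> //; exists Rb, to_Rb, nu_Rb.
split; [exact: to_loc_localization | exact: nu_Rb_mult | exact: nu_Rb_to_Rb |].
by exists (to_loc Rprime_denom_localizable); split; first exact: to_loc_localization.
Qed.

Section Reduction.
Variables (D : G -> Prop) (Q : comNzRingType) (pi : {rmorphism R -> Q}) (nu2 : Q -> option G).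
Hypotheses (HD : convex_subgroup le nu D) (Dgb : D gb)
  (pi_surj : forall y, exists x, pi x = y)
  (pi_ker : forall x, pi x = 0 <-> center1 le nu D x)
  (nu2_pi : forall x, (center1 le nu D x -> nu2 (pi x) = None) /\
                      (~ center1 le nu D x -> nu2 (pi x) = nu x)).
Variables (bbar : Q) (asbar : seq Q) (Qb Rbar1 : comNzRingType) (to_Qb : {rmorphism Q -> Qb})
  (nu_Qb : Qb -> option G) (to_Rbar1 : Qb -> Rbar1).
Hypotheses (pib : pi b = bbar) (as_lift : map pi as_ = asbar)
  (to_Qb_loc : is_localization (fun y => exists n, y = bbar ^+ n) to_Qb)
  (nu_Qb_mult : vmult nu_Qb) (nu_Qb_to_Qb : forall y, nu_Qb (to_Qb y) = nu2 y)
  (to_Rbar1_loc : is_localization_on (blowup_ring to_Qb bbar asbar)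
              (off_center le (blowup_ring to_Qb bbar asbar) nu_Qb) to_Rbar1).

Local Notation p := (center1 le nu D).
Local Notation pRb := (center1 le nu_Rb D).
Local Notation Qprime := (blowup_ring to_Qb bbar asbar).
Local Notation frac_b a n := (frac bpow_localizable a (b ^+ n)).

Let HDsub : is_subgroup D. Proof. by case: HD. Qed.

Lemma center_Rb_frac a n : pRb (frac_b a n) <-> p a.
Proof. by rewrite /center1 nu_Rb_frac; apply: above_vsub => //; apply: subgroupMn. Qed.

Lemma not_center_bpow u : bpow u -> ~ p u.
Proof. by case=> n ->; exact: not_center1I (nu_bpow n) (subgroupMn HDsub n Dgb). Qed.

Lemma to_Qb_bpow_unit u : bpow u -> is_unit (to_Qb (pi u)).
Proof. by case: to_Qb_loc => _ _ unit _ _ [n ->]; apply: unit; exists n; rewrite rmorphXn pib. Qed.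

Definition reduce_Rb : {rmorphism Rb -> Qb} :=
  loc_lift_rmorph bpow_localizable (g := to_Qb \o pi) to_Qb_bpow_unit.
Local Notation reduce t := (to_Rbar1 (reduce_Rb t)).

Lemma reduce_to_Rb x : reduce_Rb (to_Rb x) = to_Qb (pi x).
Proof. by rewrite to_loc_rmorphE loc_lift_rmorph_to_loc. Qed.

Lemma reduce_Rb_frac a n : reduce_Rb (frac_b a n) * to_Qb (pi (b ^+ n)) = to_Qb (pi a).
Proof.
have bn : bpow (b ^+ n) by exists n.
rewrite loc_lift_rmorph_frac // -mulrA [_ * to_Qb _]mulrC mulr_uinv ?mulr1 //.
exact: to_Qb_bpow_unit.
Qed.

Lemma reduce_Rb_center t : pRb t -> reduce_Rb t = 0.
Proof.
have [a [n ->]] := Rb_fracP t; move/center_Rb_frac/pi_ker => pa0.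
have bn : bpow (b ^+ n) by exists n.
by apply: (unit_mul_eq0 (to_Qb_bpow_unit bn)); rewrite mulrC reduce_Rb_frac pa0 rmorph0.
Qed.

Lemma nu_Qb_reduce t : ~ pRb t -> nu_Qb (reduce_Rb t) = nu_Rb t.
Proof.
have [a [n ->]] := Rb_fracP t; move/center_Rb_frac => npa.
have bn : bpow (b ^+ n) by exists n.
have := congr1 nu_Qb (reduce_Rb_frac a n); rewrite nu_Qb_mult !nu_Qb_to_Qb.
rewrite (proj2 (nu2_pi _) npa) (proj2 (nu2_pi _) (not_center_bpow bn)) nu_bpow nu_Rb_frac.
by move/(congr1 (fun y => vsub y (Some (gb *+ n)))); rewrite vsub_addK.
Qed.

Lemma nu_Qb0 : nu_Qb 0 = None.
Proof.
rewrite -(rmorph0 to_Qb) nu_Qb_to_Qb -(rmorph0 pi).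
by apply: (proj1 (nu2_pi 0)); apply: center1_0.
Qed.

Lemma reduce_Rb_Rprime t : Rprime t -> Qprime (reduce_Rb t).
Proof.
move: t; apply: gen_subring_ind; first exact/subring_preim/gen_subring_closed.
move=> t [[x ->] | [a [ain e]]]; apply: gen_subring_gen.
  by left; exists (pi x); rewrite reduce_to_Rb.
right; exists (pi a); split; first by rewrite -as_lift map_f.
by rewrite -pib -reduce_to_Rb -rmorphM e reduce_to_Rb.
Qed.

Lemma Qprime_reduce y : Qprime y -> exists2 t, Rprime t & reduce_Rb t = y.
Proof.
move: y; apply: gen_subring_ind; first exact/subring_image/Rprime_closed.
move=> y [[q ->] | [abar [+ e]]].
  by have [x <-] := pi_surj q; exists (to_Rb x); [apply: Rprime_to_Rb | apply: reduce_to_Rb].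
rewrite -as_lift => /mapP[a ain eabar].
exists (frac_b a 1).
  apply: gen_subring_gen; right; exists a; split => //.
  by rewrite expr1 frac_to_loc //; exists 1%N; rewrite expr1.
have b1 : bpow (b ^+ 1) by exists 1%N.
by apply: (unit_mulIl (to_Qb_bpow_unit b1)); rewrite reduce_Rb_frac expr1 pib e eabar.
Qed.

Lemma Rprime_denom_not_center u : Rprime_denom u -> ~ pRb u.
Proof. by move/Rprime_denom_val0 => vu; apply: not_center1I vu (subgroup0 HDsub). Qed.

Lemma Rprime_denom_reduce t :
  Rprime t -> Rprime_denom t <-> off_center le Qprime nu_Qb (reduce_Rb t).
Proof.
move=> Rt; have [pt|npt] := pselect (pRb t).
  rewrite reduce_Rb_center //; split=> [/Rprime_denom_not_center // | [_]].
  by rewrite nu_Qb0; case; split.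
rewrite /Rprime_denom /off_center nu_Qb_reduce //.
by split=> -[_ nlt]; split => //; apply: reduce_Rb_Rprime.
Qed.

Let to_Rbar1D x y : Qprime x -> Qprime y -> to_Rbar1 (x + y) = to_Rbar1 x + to_Rbar1 y.
Proof. by case: to_Rbar1_loc => to_Rbar1D _ _ _ _; apply: to_Rbar1D. Qed.
Let to_Rbar1M x y : Qprime x -> Qprime y -> to_Rbar1 (x * y) = to_Rbar1 x * to_Rbar1 y.
Proof. by case: to_Rbar1_loc => _ [to_Rbar1M _] _ _ _; apply: to_Rbar1M. Qed.
Let to_Rbar1_1 : to_Rbar1 1 = 1. Proof. by case: to_Rbar1_loc => _ []. Qed.
Let to_Rbar1U u : off_center le Qprime nu_Qb u -> is_unit (to_Rbar1 u).
Proof. by case: to_Rbar1_loc => _ _ to_Rbar1U _ _; apply: to_Rbar1U. Qed.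
Let to_Rbar1_0 : to_Rbar1 0 = 0.
Proof.
have R0 : Qprime 0 by apply: subring0; apply: gen_subring_closed.
by apply: (@addrI _ (to_Rbar1 0)); rewrite -to_Rbar1D // !addr0.
Qed.

Lemma reduce_RprimeD x y : Rprime x -> Rprime y -> reduce (x + y) = reduce x + reduce y.
Proof. by move=> Rx Ry; rewrite rmorphD to_Rbar1D //; apply: reduce_Rb_Rprime. Qed.
Lemma reduce_RprimeM x y : Rprime x -> Rprime y -> reduce (x * y) = reduce x * reduce y.
Proof. by move=> Rx Ry; rewrite rmorphM to_Rbar1M //; apply: reduce_Rb_Rprime. Qed.
Lemma reduce_Rprime1 : reduce 1 = 1. Proof. by rewrite rmorph1 to_Rbar1_1. Qed.
Lemma reduce_RprimeU u : Rprime_denom u -> is_unit (reduce u).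
Proof. by move=> Mu; apply/to_Rbar1U/Rprime_denom_reduce => //; case: Mu. Qed.

Definition reduce_R1 : {rmorphism R1 -> Rbar1} :=
  loc_lift Rprime_denom_localizable reduce_RprimeD reduce_RprimeM reduce_Rprime1 reduce_RprimeU.

Lemma reduce_R1_frac t u : Rprime t -> Rprime_denom u ->
  reduce_R1 (frac Rprime_denom_localizable t u) = reduce t * uinv (reduce u).
Proof. exact: loc_lift_frac. Qed.

Lemma reduce_R1_surj y : exists s, reduce_R1 s = y.
Proof.
have [ab [ub [Rab [Mub e]]]] : exists a u, Qprime a /\ off_center le Qprime nu_Qb u /\
    y * to_Rbar1 u = to_Rbar1 a by case: to_Rbar1_loc => _ _ _ surj _; apply: surj.
have [ta Rta hta] := Qprime_reduce Rab; have [tu Rtu htu] := Qprime_reduce (proj1 Mub).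
have Mtu : Rprime_denom tu by apply/Rprime_denom_reduce => //; rewrite htu.
exists (frac Rprime_denom_localizable ta tu).
by rewrite reduce_R1_frac // hta htu -e -mulrA mulr_uinv ?mulr1 //; apply: to_Rbar1U.
Qed.

Lemma reduce_R1_eq0 s : reduce_R1 s = 0 <-> center1 le nu_R1 D s.
Proof.
have [t [u [Rt Mu ->]]] := fracP s.
rewrite /center1 nu_R1_frac // -/(center1 le nu_Rb D t) reduce_R1_frac //.
have uu : is_unit (uinv (reduce u)) by apply/uinv_unit/reduce_RprimeU.
have -> : reduce t * uinv (reduce u) = 0 <-> reduce t = 0.
  by split=> [|->]; [rewrite mulrC; apply: unit_mul_eq0 | rewrite mul0r].
have [pt|npt] := pselect (pRb t); first by rewrite reduce_Rb_center // to_Rbar1_0.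
split=> [|/npt //]; case: to_Rbar1_loc => _ _ _ _ /(_ _ (reduce_Rb_Rprime Rt)) ker.
case/ker => ub [[_ nlt] /(congr1 nu_Qb)]; rewrite nu_Qb_mult nu_Qb0 nu_Qb_reduce //.
case: (nu_Qb ub) nlt => [c|] nlt; last by case: nlt; split.
by have := not_center1_fin npt; case: (nu_Rb t).
Qed.

Local Notation Hp := (not_center1_localizable Hord nu_mult nu1 nu0 nu_ge0 HD).
Local Notation Rp := (loc Hp).

Definition to_Rp : {rmorphism R -> Rp} := to_loc_rmorph Hp (g := idfun) (fun _ => I).

Lemma to_Rp_unit x : ~ p x -> is_unit (to_Rp x).
Proof. exact: to_loc_unit. Qed.

Definition Rb_to_Rp : {rmorphism Rb -> Rp} :=
  loc_lift_rmorph bpow_localizable (g := to_Rp) (fun u bu => to_Rp_unit (not_center_bpow bu)).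

Lemma Rb_to_Rp_unit t : ~ pRb t -> is_unit (Rb_to_Rp t).
Proof.
have [a [n ->]] := Rb_fracP t; move/center_Rb_frac => npa.
have bn : bpow (b ^+ n) by exists n.
rewrite loc_lift_rmorph_frac //; apply: unitM (to_Rp_unit npa) _.
exact/uinv_unit/to_Rp_unit/not_center_bpow.
Qed.

Definition R1_to_Rp : {rmorphism R1 -> Rp} :=
  loc_lift_rmorph Rprime_denom_localizable (g := Rb_to_Rp)
    (fun u Mu => Rb_to_Rp_unit (Rprime_denom_not_center Mu)).

Lemma R1_to_Rp_blowup x : R1_to_Rp (blowup_map x) = to_Rp x.
Proof.
rewrite to_loc_rmorphE loc_lift_rmorph_to_loc; last exact: Rprime_to_Rb.
by rewrite to_loc_rmorphE loc_lift_rmorph_to_loc.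
Qed.

Lemma R1_to_Rp_unit s : ~ center1 le nu_R1 D s -> is_unit (R1_to_Rp s).
Proof.
have [t [u [Rt Mu ->]]] := fracP s.
rewrite /center1 nu_R1_frac // -/(center1 le nu_Rb D t) => npt.
rewrite loc_lift_rmorph_frac //; apply: unitM (Rb_to_Rp_unit npt) _.
exact/uinv_unit/Rb_to_Rp_unit/Rprime_denom_not_center.
Qed.

Lemma R1_to_Rp_eq0 s : R1_to_Rp s = 0 -> exists2 s', ~ center1 le nu_R1 D s' & s' * s = 0.
Proof.
have [t [u [Rt Mu ->]]] := fracP s; case: (Rb_fracP t) Rt => a [n ->] Rt.
have bn : bpow (b ^+ n) by exists n.
rewrite loc_lift_rmorph_frac // mulrC.
move/(unit_mul_eq0 (uinv_unit (Rb_to_Rp_unit (Rprime_denom_not_center Mu)))).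
rewrite loc_lift_rmorph_frac // mulrC.
move/(unit_mul_eq0 (uinv_unit (to_Rp_unit (not_center_bpow bn)))).
rewrite to_loc_rmorphE to_locE // => /(frac_eq0 Hp I (loc_denom1 Hp)) [w nw wa].
set to_R1 := to_loc Rprime_denom_localizable.
(* The numerator a is killed by some w outside p, so w b^n u kills a / b^n / u. *)
exists (blowup_map (w * b ^+ n) * to_R1 u).
  have [g nug Dg] := not_center1E Hord nu_ge0 HD
    (not_center1M Hord nu_mult nu_ge0 HD nw (not_center_bpow bn)).
  apply: (not_center1I (g := g + 0)); last by rewrite addr0.
  rewrite nu_R1_mult nu_R1_blowup nug /nu_R1.
  rewrite (loc_val_to_loc _ nu_Rb_mult Rprime_denom_fin nu_Rb1) ?(Rprime_denom_val0 Mu) //.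
  by case: Mu.
have e1 : frac Rprime_denom_localizable (frac_b a n) u * to_R1 u = to_R1 (frac_b a n).
  exact: frac_to_loc.
have e2 : blowup_map (b ^+ n) * to_R1 (frac_b a n) = blowup_map a.
  rewrite [blowup_map _]to_loc_rmorphE -to_locM; [| exact: Rprime_to_Rb | done].
  by rewrite (mulrC (to_Rb _)) to_loc_rmorphE frac_to_loc.
rewrite rmorphM -!mulrA [to_R1 u * _]mulrC e1 e2 -rmorphM.
by rewrite (wa : w * a = 0) rmorph0.
Qed.

Lemma R1_to_Rp_localization : is_localization (fun s => ~ center1 le nu_R1 D s) R1_to_Rp.
Proof.
split=> [x y _ _ | | s | z | s _]; first exact: rmorphD.
- by split=> [x y _ _ |]; [exact: rmorphM | exact: rmorph1].
- exact: R1_to_Rp_unit.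
- have [a [u [_ npu ->]]] := fracP z; exists (blowup_map a), (blowup_map u).
  split=> //; split; first by rewrite /center1 nu_R1_blowup.
  by rewrite !R1_to_Rp_blowup; apply: frac_to_loc.
- split=> [/R1_to_Rp_eq0[s' ns' e] | [s' [ns' e]]]; first by exists s'.
  by apply: (unit_mul_eq0 (R1_to_Rp_unit ns')); rewrite -rmorphM e rmorph0.
Qed.
End Reduction.
End Blowup.

Theorem mainTheorem6
  (R : comNzRingType) (m : R -> Prop)
  (G : zmodType) (le : rel G) (nu : R -> option G) (D : G -> Prop)
  (Hnoeth : noetherian R) (Hloc : is_local m)
  (Hord : ordered_group le) (Hval : is_valuation le nu) (Hcent : centered_on le nu m)
  (HD : convex_subgroup le nu D)
  (* R/p, with p = C_{nu_1}(R), given by the quotient map pi *)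
  (Q : comNzRingType) (pi : {rmorphism R -> Q})
  (Hpi_surj : forall y, exists x, pi x = y)
  (Hpi_ker : forall x, pi x = 0 <-> center1 le nu D x)
  (* nu_2 on R/p *)
  (nu2 : Q -> option G)
  (Hnu2 : forall x, (center1 le nu D x -> nu2 (pi x) = None) /\
                    (~ center1 le nu D x -> nu2 (pi x) = nu x))
  (* a local blowing up R/p -> Rbar1 w.r.t. nu_2 *)
  (Rbar1 : comNzRingType) (phibar : {rmorphism Q -> Rbar1}) (bbar : Q) (asbar : seq Q)
  (Hbl : local_blowup le phibar nu2 bbar asbar) :
  exists (S : comNzRingType) (phi : {rmorphism R -> S}) (b : R) (as_ : seq R)
         (nuS : S -> option G),
    [/\ local_blowup le phi nu b as_,
        (* nuS is the extension of nu to R^(1); p^(1) = center1 le nuS D *)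
        vmult nuS /\ (forall x, nuS (phi x) = nu x),
        (* R^(1)/p^(1) ~ Rbar1 *)
        (exists (Q1 : comNzRingType) (q : {rmorphism S -> Q1}),
           [/\ forall y, exists x, q x = y,
               forall s, q s = 0 <-> center1 le nuS D s
             & exists i : {rmorphism Q1 -> Rbar1}, bijective i])
      & (* R_p ~ R^(1)_{p^(1)} *)
        exists (L1 L2 : comNzRingType) (l1 : {rmorphism R -> L1}) (l2 : {rmorphism S -> L2}),
          [/\ is_localization (fun x => ~ center1 le nu D x) l1,
              is_localization (fun s => ~ center1 le nuS D s) l2
            & exists i : {rmorphism L1 -> L2}, bijective i]].
Proof.
case: Hbl => nu2b [nu2_as [Qb [to_Qb [nu_Qb [to_Qb_loc nu_Qb_mult nu_Qb_to_Qb Hfb]]]]].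
have [to_Rbar1 [to_Rbar1_loc _]] := Hfb.
case: Hval => nu_mult nu_ultra nu1 nu0 _; case: Hcent => nu_ge0 _.
have [b pib] := Hpi_surj bbar.
have [gb nub Dgb] : exists2 gb, nu b = Some gb & D gb.
  by apply: (residue_val_fin Hord nu_ge0 HD Hnu2); rewrite pib.
have [as_ as_lift] := map_surj Hpi_surj asbar.
have nu_as a : a \in as_ -> vle le (nu b) (nu a).
  move=> ain; apply: (residue_val_le Hord nu_ge0 HD Hnu2 (not_center1I nub Dgb)).
  by rewrite pib; apply: nu2_as; rewrite -as_lift map_f.
exists _, (blowup_map Hord nu_mult nu_ultra nu1 nu0 nu_ge0 nub nu_as), b, as_,
  (nu_R1 (nub := nub) (nu_as := nu_as)).
split; first exact: blowup_local_blowup.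
- by split; [exact: nu_R1_mult | exact: nu_R1_blowup].
- exists Rbar1, (reduce_R1 _ _ _ _ _ _ _ _ HD Dgb Hpi_ker Hnu2 pib as_lift
                   to_Qb_loc nu_Qb_mult nu_Qb_to_Qb to_Rbar1_loc).
  split; [exact: reduce_R1_surj | exact: reduce_R1_eq0 | by exists idfun; exists idfun].
- exists _, _, (to_Rp Hord nu_mult nu1 nu0 nu_ge0 HD), (R1_to_Rp _ _ _ _ _ _ nub nu_as HD Dgb).
  split; [exact: to_loc_localization | exact: R1_to_Rp_localization |].
  by exists idfun; exists idfun.
Qed.
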